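(* Let $d\ge1$ and $\lambda=(\lambda_1,\dots,\lambda_d)$ a vector of positive integers with $\sum_t\lambda_t=n\ge2$. For distinct $i,j\in\{0,\dots,n-2\}$, we have $i\preceq j$ in $P(\lambda)$ if and only if $i<j$ and for every $t\in\{1,\dots,d\}$, \[ \frac{s_{t,i}+s_{t,j-i}-s_{t,j}}{n-1}=\left\lceil \frac{s_{t,i}}{n-1}\right\rceil + \left\lceil \frac{s_{t,j-i}}{n-1}\right\rceil - \left\lceil \frac{s_{t,j}}{n-1}\right\rceil . \]
   Context: $\Delta_\lambda=\mathrm{conv}(e_1,\dots,e_d,\lambda)\subset\mathbb{R}^d$, with fundamental parallelepiped $\Pi_\lambda=\{\sum_{i=1}^d\gamma_i(1,e_i)+\gamma_{d+1}(1,\lambda):0\le\gamma_i<1\}\subset\mathbb{R}^{d+1}$. $P(\lambda)$ is $\Pi_\lambda\cap\mathbb{Z}^{d+1}$ ordered by $\sigma\preceq\mu$ iff $\mu-\sigma\in\Pi_\lambda\cap\mathbb{Z}^{d+1}$. For $0\le b<n-1$ set $p(b)=\left(\sum_{t}\lceil b\lambda_t/(n-1)\rceil-b,\ \lceil b\lambda_1/(n-1)\rceil,\dots,\lceil b\lambda_d/(n-1)\rceil\right)$; $b\mapsto p(b)$ is a bijection from $\{0,\dots,n-2\}$ onto $\Pi_\lambda\cap\mathbb{Z}^{d+1}$ and each integer $b$ is identified with $p(b)$. For $0\le i<n-1$ and $1\le t\le d$, the integers $r_{t,i}\ge0$ and $0\le s_{t,i}<n-1$ are defined by $i\lambda_t=r_{t,i}(n-1)+s_{t,i}$.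 *)

From HB Require Import structures.
From mathcomp Require Import all_boot all_order all_algebra.
From mathcomp Require Import reals.
Set Implicit Arguments. Unset Strict Implicit. Unset Printing Implicit Defensive.
Import Order.TTheory GRing.Theory Num.Theory.
Local Open Scope ring_scope.

(* lambda is given as lam : 'I_d -> nat, lam t = lambda_{t+1}. *)
Definition nlam (d : nat) (lam : 'I_d -> nat) : nat := (\sum_(t < d) lam t)%N.

(* A point of R^{d+1} is written as a pair (x0, x) with x0 the first
   coordinate and x t the coordinate corresponding to e_{t+1}. *)
Definition in_Pi (R : realType) (d : nat) (lam : 'I_d -> nat)
    (x0 : R) (x : 'I_d -> R) : Prop :=
  exists (gam : 'I_d -> R) (g : R),
    (forall t, 0 <= gam t < 1) /\ (0 <= g < 1) /\
    x0 = \sum_(t < d) gam t + g /\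
    (forall t, x t = gam t + g * (lam t)%:R).

Definition ceilq (a m : nat) : int := Num.ceil ((a%:R / m%:R) : rat).

Definition p0 (d : nat) (lam : 'I_d -> nat) (b : nat) : int :=
  \sum_(t < d) ceilq (b * lam t) (nlam lam).-1 - b%:Z.
Definition pc (d : nat) (lam : 'I_d -> nat) (b : nat) (t : 'I_d) : int :=
  ceilq (b * lam t) (nlam lam).-1.

(* i ⪯ j in P(lambda): p(j) - p(i) lies in Pi_lambda ∩ Z^{d+1}
   (the difference is automatically an integer point). *)
Definition preceq (R : realType) (d : nat) (lam : 'I_d -> nat) (i j : nat) : Prop :=
  in_Pi lam ((p0 lam j - p0 lam i)%:~R : R)
            (fun t => ((pc lam j t - pc lam i t)%:~R : R)).

Definition s_ (d : nat) (lam : 'I_d -> nat) (t : 'I_d) (i : nat) : nat :=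
  ((i * lam t) %% (nlam lam).-1)%N.

From HB Require Import structures.
From mathcomp Require Import all_boot all_order all_algebra.
From mathcomp Require Import reals.
From mathcomp Require Import zify ring lra.
Import Order.TTheory GRing.Theory Num.Theory.
Local Open Scope ring_scope.

(* Writing p(j) - p(i) in the basis (1, e_t), (1, lambda) of R^(d+1), the
   coefficient of (1, lambda) is g = (j - i)/(n - 1) and that of (1, e_t) is
   gam_t = c_t(j) - c_t(i) - g lambda_t, where c_t(b) = ceil(b lambda_t/(n - 1)).
   Hence g lies in [0, 1) iff i <= j, and gam_t lies in [0, 1) iff
   c_t(j) = c_t(i) + c_t(j - i), i.e. the ceiling is additive on
   i lambda_t + (j - i) lambda_t.  Since ceil((r (n - 1) + s)/(n - 1)) =
   r + ceil(s/(n - 1)), and the quotients r satisfy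
   (r_j - r_i - r_(j-i)) (n - 1) = s_i + s_(j-i) - s_j, this additivity is
   exactly the stated identity between remainders. *)

Lemma ceilq_eq (a : nat) {M : nat} (e : int) : (0 < M)%N ->
  (ceilq a M == e) = (0 <= e * M%:Z - a%:Z < M%:Z).
Proof.
move=> M_gt0; have M_gt0Q : (0 : rat) < M%:R by rewrite ltr0n.
rewrite /ceilq ceil_eq ltr_pdivlMr // ler_pdivrMr //.
rewrite !pmulrn -!intrM !ltr_int !ler_int.
by apply/idP/idP => /andP[h1 h2]; apply/andP; split; lia.
Qed.

Lemma ceilq_divn_mod (a : nat) {M : nat} : (0 < M)%N ->
  ceilq a M = (a %/ M)%:Z + ceilq (a %% M) M.
Proof.
move=> M_gt0; apply/eqP; rewrite ceilq_eq //.
have := ceilq_eq (a %% M) (ceilq (a %% M) M) M_gt0; rewrite eqxx.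
have := divn_eq a M; lia.
Qed.

Lemma ceilq_addnE (a b : nat) {M : nat} : (0 < M)%N ->
  (ceilq (a + b) M == ceilq a M + ceilq b M) =
  ((a %% M)%:Z + (b %% M)%:Z - ((a + b) %% M)%:Z ==
   (ceilq (a %% M) M + ceilq (b %% M) M - ceilq ((a + b) %% M) M) * M%:Z).
Proof.
move=> M_gt0.
rewrite (ceilq_divn_mod (a + b) M_gt0) (ceilq_divn_mod a M_gt0).
rewrite (ceilq_divn_mod b M_gt0).
have -> : (a %% M)%:Z + (b %% M)%:Z - ((a + b) %% M)%:Z =
          (((a + b) %/ M)%:Z - (a %/ M)%:Z - (b %/ M)%:Z) * M%:Z.
  have := divn_eq a M; have := divn_eq b M; have := divn_eq (a + b) M; lia.
rewrite (inj_eq (mulIf _)); last by rewrite lt0r_neq0 // ltz_nat.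
by apply/eqP/eqP; lia.
Qed.

Lemma ceilq_gapE (l : nat) {i j M : nat} : (0 < M)%N -> (i <= j)%N ->
  (0 <= M%:Z * (ceilq (j * l) M - ceilq (i * l) M) - (j%:Z - i%:Z) * l%:Z < M%:Z) =
  (ceilq (j * l) M == ceilq (i * l) M + ceilq ((j - i) * l) M).
Proof.
move=> M_gt0 le_ij.
rewrite subzn // -PoszM mulrC -ceilq_eq //.
by apply/eqP/eqP; lia.
Qed.

Lemma intr_divn_eqP {F : numFieldType} (X Y : int) {M : nat} : (0 < M)%N ->
  reflect (X%:~R / M%:R = Y%:~R :> F) (X == Y * M%:Z).
Proof.
move=> M_gt0; have M_neq0 : (M%:R : F) != 0 by rewrite pnatr_eq0 -lt0n.
apply: (iffP eqP) => [-> | /(congr1 ( *%R^~ M%:R))].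
  by rewrite intrM mulfK.
by rewrite mulfVK // pmulrn -intrM => /intr_inj.
Qed.

Lemma in_PiP (R : realType) (d : nat) (lam : 'I_d -> nat) (x0 : R) (x : 'I_d -> R) :
  (1 < nlam lam)%N ->
  in_Pi lam x0 x <->
  (0 <= \sum_(t < d) x t - x0 < ((nlam lam).-1)%:R) /\
  (forall t, 0 <= ((nlam lam).-1)%:R * x t - (\sum_(t < d) x t - x0) * (lam t)%:R
               < ((nlam lam).-1)%:R).
Proof.
move=> n_gt1; set M := (nlam lam).-1.
have M_gt0 : (0 : R) < M%:R by rewrite ltr0n /M; lia.
have sum_lam : \sum_(t < d) ((lam t)%:R : R) = M%:R + 1.
  by rewrite -natr_sum natr1 /M prednK //; lia.
split.
- case=> gam [g [gam01 [/andP[g_ge0 g_lt1] [-> x_def]]]].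
  have -> : \sum_(t < d) x t - (\sum_(t < d) gam t + g) = g * M%:R.
    by rewrite (eq_bigr _ (fun t _ => x_def t)) big_split /= -mulr_sumr sum_lam; ring.
  split; first by apply/andP; split; nra.
  move=> t; have /andP[gam_ge0 gam_lt1] := gam01 t.
  by rewrite x_def; apply/andP; split; nra.
- set h := \sum_(t < d) x t - x0 => -[/andP[h_ge0 h_ltM] gam01].
  exists (fun t => x t - h / M%:R * (lam t)%:R), (h / M%:R).
  split; last split; last split.
  + move=> t; have /andP[gam_ge0 gam_ltM] := gam01 t.
    have -> : x t - h / M%:R * (lam t)%:R = (M%:R * x t - h * (lam t)%:R) / M%:R.
      by field; rewrite lt0r_neq0.
    by rewrite ler_pdivlMr // ltr_pdivrMr // mul0r mul1r gam_ge0.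
  + by rewrite ler_pdivlMr // ltr_pdivrMr // mul0r mul1r h_ge0.
  + rewrite sumrB -mulr_sumr sum_lam /h; field; exact: lt0r_neq0.
  + by move=> t; rewrite subrK.
Qed.

Lemma sum_pc_sub_p0 (R : pzRingType) {d : nat} (lam : 'I_d -> nat) (i j : nat) :
  \sum_(t < d) ((pc lam j t - pc lam i t)%:~R : R) - (p0 lam j - p0 lam i)%:~R
  = (j%:Z - i%:Z)%:~R.
Proof. by rewrite -rmorph_sum -rmorphB /= sumrB /p0; congr intr; ring. Qed.

Lemma pc_gapP (R : realType) {d : nat} (lam : 'I_d -> nat) (i j : nat) (t : 'I_d) :
  (1 < nlam lam)%N -> (i <= j)%N ->
  (0 <= ((nlam lam).-1)%:R * ((pc lam j t - pc lam i t)%:~R : R)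
          - (j%:Z - i%:Z)%:~R * (lam t)%:R < ((nlam lam).-1)%:R)
  <-> ((s_ lam t i)%:Z + (s_ lam t (j - i))%:Z - (s_ lam t j)%:Z)%:~R
        / ((nlam lam).-1)%:R
      = (ceilq (s_ lam t i) (nlam lam).-1 + ceilq (s_ lam t (j - i)) (nlam lam).-1
         - ceilq (s_ lam t j) (nlam lam).-1)%:~R :> rat.
Proof.
move=> n_gt1 le_ij; set M := (nlam lam).-1.
have M_gt0 : (0 < M)%N by rewrite /M; lia.
rewrite [M%:R]pmulrn [(lam t)%:R]pmulrn -!intrM -intrB ler0z ltr_int.
rewrite /pc -/M (ceilq_gapE (lam t) M_gt0 le_ij).
have := ceilq_addnE (i * lam t) ((j - i) * lam t) M_gt0.
rewrite -mulnDl (subnKC le_ij) => ->.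
by rewrite /s_ -/M; apply: iff_sym; apply: rwP; apply: intr_divn_eqP.
Qed.

Theorem lemma2p16 (R : realType) (d : nat) (lam : 'I_d -> nat) (i j : nat) :
  (1 <= d)%N ->
  (forall t, 0 < lam t)%N ->
  (2 <= nlam lam)%N ->
  (i <= (nlam lam) - 2)%N -> (j <= (nlam lam) - 2)%N -> i != j ->
  (preceq R lam i j <->
   ((i < j)%N /\
    forall t : 'I_d,
      ((s_ lam t i)%:Z + (s_ lam t (j - i))%:Z - (s_ lam t j)%:Z)%:~R
        / ((nlam lam).-1)%:R
      = (ceilq (s_ lam t i) (nlam lam).-1 + ceilq (s_ lam t (j - i)) (nlam lam).-1
         - ceilq (s_ lam t j) (nlam lam).-1)%:~R :> rat)).
Proof.
move=> _ _ n_gt1 le_i le_j neq_ij.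
rewrite /preceq in_PiP // sum_pc_sub_p0.
have shiftE : (0 <= ((j%:Z - i%:Z)%:~R : R) < ((nlam lam).-1)%:R) = (i < j)%N.
  have lt_jM : (j < (nlam lam).-1)%N by lia.
  by rewrite pmulrn ler0z ltr_int; apply/idP/idP; lia.
rewrite shiftE; split=> -[lt_ij coord]; split=> // t;
  by apply/(pc_gapP R lam i j t n_gt1 (ltnW lt_ij)); apply: coord.
Qed.
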